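(* If a semigroup $\langle A;\cdot\rangle$ is a Hamiltonian algebra, then for every $a\in A$ there exist integers $i,j$ with $1\le i<j$ such that $a^i=a^j$.
   Context: A semigroup is regarded as an algebra $\langle A;\cdot\rangle$ with one associative binary operation; its subalgebras are the nonempty subsets closed under $\cdot$. An algebra is called Hamiltonian if the universe of every subalgebra is an equivalence class (block) of some congruence of the algebra. *)

From Stdlib Require Import Arith.

Section SemigroupDefs.
Variable A : Type.
Variable op : A -> A -> A.

Definition associative_op : Prop :=
  forall x y z, op x (op y z) = op (op x y) z.

Definition is_subalgebra (B : A -> Prop) : Prop :=
  (exists x, B x) /\ (forall x y, B x -> B y -> B (op x y)).

Definition is_congruence (theta : A -> A -> Prop) : Prop :=
  (forall x, theta x x) /\
  (forall x y, theta x y -> theta y x) /\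
  (forall x y z, theta x y -> theta y z -> theta x z) /\
  (forall x1 y1 x2 y2, theta x1 y1 -> theta x2 y2 -> theta (op x1 x2) (op y1 y2)).

Definition is_block (theta : A -> A -> Prop) (B : A -> Prop) : Prop :=
  exists x, forall y, B y <-> theta x y.

Definition hamiltonian : Prop :=
  forall B, is_subalgebra B ->
    exists theta, is_congruence theta /\ is_block theta B.

(* spow_aux a n = a^(n+1); spow a i = a^i for i >= 1 (spow a 0 = a, junk). *)
Fixpoint spow_aux (a : A) (n : nat) : A :=
  match n with
  | 0 => a
  | S m => op (spow_aux a m) a
  end.

Definition spow (a : A) (i : nat) : A := spow_aux a (i - 1).

End SemigroupDefs.

(* Let B be the subalgebra of the powers a^n with n in the numerical semigroup
   generated by 3 and 5, which contains a^3 and a^5 but not the exponent 7.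
   If B is a block of a congruence, then a^5 = a^2 a^3 and a^7 = a^2 a^5 are
   congruent, so a^7 lies in B: a^7 = a^n for some exponent n <> 7. *)
From Stdlib Require Import Arith Lia.

Section HamiltonianSemigroup.

Variable A : Type.
Variable op : A -> A -> A.
Hypothesis op_assoc : associative_op A op.

Lemma spow_S (a : A) (n : nat) : 1 <= n -> spow A op a (S n) = op (spow A op a n) a.
Proof.
  intros Hn; unfold spow.
  replace (S n - 1) with (S (n - 1)) by lia; reflexivity.
Qed.

Lemma spow_add (a : A) (m n : nat) :
  1 <= m -> 1 <= n -> op (spow A op a m) (spow A op a n) = spow A op a (m + n).
Proof.
  intros Hm Hn; induction Hn as [|n Hn IH].
  - rewrite Nat.add_1_r, (spow_S a m Hm); reflexivity.
  - rewrite (spow_S a n Hn), Nat.add_succ_r, (spow_S a (m + n)) by lia.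
    rewrite op_assoc, IH; reflexivity.
Qed.

Definition spow_set (a : A) (S : nat -> Prop) (x : A) : Prop :=
  exists n, S n /\ 1 <= n /\ x = spow A op a n.

Lemma spow_set_subalgebra (a : A) (S : nat -> Prop) :
  (exists n, S n /\ 1 <= n) ->
  (forall m n, S m -> S n -> S (m + n)) ->
  is_subalgebra A op (spow_set a S).
Proof.
  intros [n0 [Hn0 Hpos]] Hadd; split.
  - exists (spow A op a n0), n0; auto.
  - intros x y [m [Hm [Hm1 ->]]] [n [Hn [Hn1 ->]]].
    exists (m + n); split; [auto|split; [lia|]].
    apply spow_add; assumption.
Qed.

(* x and y lie in one class, hence so do z x and z y. *)
Lemma block_mul_transfer (theta : A -> A -> Prop) (B : A -> Prop) (x y z : A) :
  is_congruence A op theta -> is_block A theta B ->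
  B x -> B y -> B (op z x) -> B (op z y).
Proof.
  intros [Hrefl [Hsym [Htrans Hcomp]]] [c Hc] Hx Hy Hzx.
  apply Hc in Hx, Hy, Hzx; apply Hc.
  apply (Htrans _ (op z x)); [exact Hzx|].
  apply Hcomp; [apply Hrefl|].
  apply (Htrans _ c); [apply Hsym|]; assumption.
Qed.

Lemma hamiltonian_mul_transfer (B : A -> Prop) (x y z : A) :
  hamiltonian A op -> is_subalgebra A op B ->
  B x -> B y -> B (op z x) -> B (op z y).
Proof.
  intros Hham HB; destruct (Hham B HB) as [theta [Hcong Hblock]].
  exact (block_mul_transfer theta B x y z Hcong Hblock).
Qed.

End HamiltonianSemigroup.

Definition semigroup35 (n : nat) : Prop := exists p q, n = 3 * p + 5 * q.

Lemma semigroup35_add (m n : nat) : semigroup35 m -> semigroup35 n -> semigroup35 (m + n).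
Proof. intros [p [q ->]] [p' [q' ->]]; exists (p + p'), (q + q'); lia. Qed.

Lemma semigroup35_7 : ~ semigroup35 7.
Proof. intros [p [q H]]; lia. Qed.

Theorem mainTheorem4 (A : Type) (op : A -> A -> A) :
  associative_op A op ->
  hamiltonian A op ->
  forall a : A, exists i j : nat, 1 <= i /\ i < j /\ spow A op a i = spow A op a j.
Proof.
  intros Hassoc Hham a.
  set (B := spow_set A op a semigroup35).
  assert (HB : is_subalgebra A op B).
  { apply spow_set_subalgebra; [exact Hassoc| |exact semigroup35_add].
    exists 3; split; [exists 1, 0|]; lia. }
  assert (Hpow : forall n, semigroup35 n -> 1 <= n -> B (spow A op a n))
    by (intros n Hn Hn1; exists n; auto).
  assert (H3 : B (spow A op a 3)) by (apply Hpow; [exists 1, 0|]; lia).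
  assert (H5 : B (spow A op a 5)) by (apply Hpow; [exists 0, 1|]; lia).
  assert (H7 : B (spow A op a 7)).
  { change (B (spow A op a (2 + 5))); rewrite <- (spow_add A op Hassoc) by lia.
    apply (hamiltonian_mul_transfer A op B (spow A op a 3)); try assumption.
    rewrite (spow_add A op Hassoc) by lia; exact H5. }
  destruct H7 as [n [Hn [Hn1 E]]].
  assert (Hne : n <> 7) by (intros ->; exact (semigroup35_7 Hn)).
  destruct (Nat.lt_gt_cases n 7) as [[Hlt|Hgt] _]; [exact Hne| |].
  - exists n, 7; repeat split; [lia|lia|symmetry; exact E].
  - exists 7, n; repeat split; [lia|lia|exact E].
Qed.
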